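(* Let $d\ge4$ be divisible by $4$, let $V=I$ (the $d\times d$ identity), let $h(x)=\|x\|$ (Euclidean norm) for $x\in\mathbb R^d$, and let $m=E(\|X\|)$ with $X\sim N(0,I)$. Let $i_0,i_1,\dots$ be i.i.d. uniform on $\{1,\dots,d\}$ and let $X_n$ be defined by the recursion below. Then for $n=d/4$, $$E\Big(\Big(\frac{\sum_{j=0}^{n-1}h(X_j)}{n}-m\Big)^2\Big)\ge\frac{d}{25}.$$
   Context: Let $e_i$ be the $i$-th standard basis column vector of $\mathbb R^d$. Let $(g_n)_{n\ge0}$ be i.i.d. standard Gaussian random variables independent of $(i_n)$. Define $X_0=0$ and $X_{n+1}=X_n+(g_n-e_{i_n}^TX_n)\,Ve_{i_n}$ for $n\ge0$. *)

From Stdlib Require Import Reals Lra List Arith.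
Import ListNotations.
Open Scope R_scope.

Definition lsum {A : Type} (f : A -> R) (l : list A) : R :=
  fold_right Rplus 0 (map f l).

(* Vectors of R^d are functions nat -> R (coordinates 0..d-1);
   d x d matrices are functions nat -> nat -> R (row, column). *)
Definition enorm (d : nat) (x : nat -> R) : R :=
  sqrt (lsum (fun k => x k ^ 2) (seq 0 d)).

Definition idmx : nat -> nat -> R := fun a b => if Nat.eqb a b then 1 else 0.

(* X_0 = 0, X_{j+1} = X_j + (g_j - e_{i_j}^T X_j) V e_{i_j}. *)
Fixpoint Xrec (V : nat -> nat -> R) (i : nat -> nat) (g : nat -> R) (j : nat)
  : nat -> R :=
  match j with
  | O => fun _ => 0
  | S j' => let x := Xrec V i g j' in
            fun k => x k + (g j' - x (i j')) * V k (i j')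
  end.

Fixpoint all_seqs (d n : nat) : list (list nat) :=
  match n with
  | O => [nil]
  | S n' => flat_map (fun a => map (cons a) (all_seqs d n')) (seq 0 d)
  end.

Definition is_RInt (f : R -> R) (a b v : R) : Prop :=
  exists pr : Riemann_integrable f a b, RiemannInt pr = v.

Definition is_RInt_R (f : R -> R) (l : R) : Prop :=
  forall eps : R, 0 < eps -> exists A : R, forall a b : R, A <= a -> A <= b ->
    exists v, is_RInt f (- a) b v /\ Rabs (v - l) < eps.

Definition gauss (x : R) : R := exp (- x ^ 2 / 2) / sqrt (2 * PI).

Definition gcons (x : R) (g : nat -> R) : nat -> R :=
  fun j => match j with O => x | S j' => g j' end.

(* gexp k F l : E[F(g_0,...,g_{k-1})] = l with g_j i.i.d. N(0,1),
   computed as an iterated improper integral against the Gaussian density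
   (the unused coordinates g_k, g_{k+1}, ... are set to 0). *)
Fixpoint gexp (k : nat) (F : (nat -> R) -> R) (l : R) : Prop :=
  match k with
  | O => F (fun _ => 0) = l
  | S k' => exists G : R -> R,
      (forall x, gexp k' (fun g => F (gcons x g)) (G x)) /\
      is_RInt_R (fun x => gauss x * G x) l
  end.

(* The random quantity ((1/n) sum_{j<n} h(X_j) - m)^2, averaged over the
   (uniform, i.i.d.) index sequences i_0..i_{n-1} in {0..d-1}; a function of g. *)
Definition sq_err_avg_idx (V : nat -> nat -> R) (d n : nat) (m : R)
  (g : nat -> R) : R :=
  / INR d ^ n *
  lsum (fun s => ((lsum (fun j => enorm d (Xrec V (fun t => nth t s O) g j))
                        (seq 0 n)) / INR n - m) ^ 2)
       (all_seqs d n).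

(* With V = I every coordinate of X_j is 0 or one of g_0, ..., g_{j-1}, each used at most once,
   so |X_j|^2 <= S_j := g_0^2 + ... + g_{j-1}^2 and, by AM-GM, |X_j| <= (S_j + n) / (2 sqrt n).
   Hence the average A of the norms has E A <= (3n - 1) / (4 sqrt n), whereas
   m = E |g| >= (d - 1) / sqrt d follows from sqrt S >= (3 d S - S^2) / (2 d sqrt d) and the
   moments E S_d = d, E S_d^2 = d^2 + 2d.  Expanding (A - m)^2 >= m^2 - 2 m A then gives
   (d - 1) / 4 for d = 4n.
   The expectations are iterated improper Riemann integrals against the Gaussian density; they
   exist for every functional of exponential growth that is locally 1/2-Hölder with an
   exponentially growing constant, a class closed under sums and products.  The Gaussian
   integral itself comes from the classical fact that
   (int_0^x e^{-t^2} dt)^2 + int_0^1 e^{-x^2 (1 + t^2)} / (1 + t^2) dt is constant. *)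

From Pilot Require Import Defs.
From Stdlib Require Import Reals Lra Lia List FunctionalExtensionality IndefiniteDescription.
From Coquelicot Require Import Coquelicot.
Open Scope R_scope.

Lemma exp_le_exp x y : x <= y -> exp x <= exp y.
Proof. intros [H | ->]; [apply Rlt_le, exp_increasing, H | apply Rle_refl]. Qed.

Definition continuous_R (f : R -> R) : Prop := forall x, continuous f x.

Lemma continuous_R_of_derive (f : R -> R) : (forall x, ex_derive f x) -> continuous_R f.
Proof. intros H x. apply (ex_derive_continuous (V := R_NormedModule)), H. Qed.

Lemma ex_RInt_continuous_R (f : R -> R) a b : continuous_R f -> ex_RInt f a b.
Proof. intro H. apply (ex_RInt_continuous (V := R_CompleteNormedModule)). intros; apply H. Qed.

Lemma continuous_R_mult (f g : R -> R) :
  continuous_R f -> continuous_R g -> continuous_R (fun x => f x * g x).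
Proof. intros Hf Hg x. apply (continuous_mult (K := R_AbsRing)); auto. Qed.

Lemma RInt_Chasles_R (f : R -> R) a b c :
  continuous_R f -> RInt f a b + RInt f b c = RInt f a c.
Proof.
  intro H. apply (RInt_Chasles (V := R_CompleteNormedModule)); apply ex_RInt_continuous_R, H.
Qed.

Lemma RInt_le_R (f g : R -> R) a b : a <= b -> continuous_R f -> continuous_R g ->
  (forall x, a <= x <= b -> f x <= g x) -> RInt f a b <= RInt g a b.
Proof.
  intros Hab Hf Hg H. apply RInt_le; auto using ex_RInt_continuous_R.
  intros; apply H; lra.
Qed.

(** * The Gaussian integral *)

Definition int_exp_sq (x : R) : R := RInt (fun t => exp (- (t * t))) 0 x.

Definition int_exp_sq_compl (x : R) : R :=
  RInt (fun t => exp (- (x * x * (1 + t * t))) / (1 + t * t)) 0 1.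

Lemma continuous_R_exp_sq : continuous_R (fun t => exp (- (t * t))).
Proof. apply continuous_R_of_derive. intro; auto_derive; auto. Qed.

Lemma int_exp_sq_scale x :
  int_exp_sq x = x * RInt (fun t => exp (- (x * t * (x * t)))) 0 1.
Proof.
  unfold int_exp_sq.
  pose proof (RInt_comp_lin (V := R_CompleteNormedModule)
                (fun t => exp (- (t * t))) x 0 0 1) as H.
  replace (x * 0 + 0) with 0 in H by ring. replace (x * 1 + 0) with x in H by ring.
  rewrite <- H by apply ex_RInt_continuous_R, continuous_R_exp_sq.
  rewrite <- (RInt_scal (V := R_CompleteNormedModule)).
  - apply RInt_ext. intros. rewrite Rplus_0_r. reflexivity.
  - apply ex_RInt_continuous_R, continuous_R_of_derive. intro; auto_derive; auto.
Qed.

Lemma is_derive_int_exp_sq x : is_derive int_exp_sq x (exp (- (x * x))).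
Proof.
  apply (is_derive_RInt (fun t => exp (- (t * t))) int_exp_sq 0).
  - apply filter_forall. intro. apply (RInt_correct (V := R_CompleteNormedModule)).
    apply ex_RInt_continuous_R, continuous_R_exp_sq.
  - apply continuous_R_exp_sq.
Qed.

(* Differentiating under the integral sign, then substituting [u = x t]. *)
Lemma is_derive_int_exp_sq_compl x :
  is_derive int_exp_sq_compl x (-2 * exp (- (x * x)) * int_exp_sq x).
Proof.
  set (f u t := exp (- (u * u * (1 + t * t))) / (1 + t * t)).
  set (df u t := -2 * u * exp (- (u * u * (1 + t * t)))).
  assert (Hf : forall u t, is_derive (fun u => f u t) u (df u t)).
  { intros u t. unfold f, df. assert (0 < 1 + t * t) by nra.
    auto_derive; [lra | field; lra]. }
  assert (Hdf : RInt (df x) 0 1 = -2 * exp (- (x * x)) * int_exp_sq x).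
  { rewrite int_exp_sq_scale.
    transitivity (RInt (fun t => scal (-2 * x * exp (- (x * x)))
                                      (exp (- (x * t * (x * t))))) 0 1).
    - apply RInt_ext. intros t _. unfold df, scal; simpl; unfold mult; simpl.
      rewrite (Rmult_assoc (-2 * x)), <- exp_plus. do 3 f_equal. ring.
    - rewrite (RInt_scal (V := R_CompleteNormedModule)).
      + unfold scal; simpl; unfold mult; simpl. ring.
      + apply ex_RInt_continuous_R, continuous_R_of_derive. intro; auto_derive; auto. }
  rewrite <- Hdf. unfold int_exp_sq_compl. fold (f x).
  rewrite (RInt_ext (df x) (fun t => Derive (fun u => f u t) x))
    by (intros; symmetry; apply is_derive_unique, Hf).
  apply (is_derive_RInt_param f).
  - apply filter_forall. intros u t _. eexists. apply Hf.
  - intros t _. apply continuity_2d_pt_ext with (f := df).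
    { intros. symmetry. apply is_derive_unique, Hf. }
    unfold df. apply continuity_2d_pt_mult.
    + apply continuity_2d_pt_mult; [apply continuity_2d_pt_const | apply continuity_2d_pt_id1].
    + apply continuity_1d_2d_pt_comp with (f := exp)
        (g := fun u v => - (u * u * (1 + v * v))).
      * apply derivable_continuous_pt, derivable_pt_exp.
      * repeat first [ apply continuity_2d_pt_opp | apply continuity_2d_pt_mult
                     | apply continuity_2d_pt_plus | apply continuity_2d_pt_const
                     | apply continuity_2d_pt_id1 | apply continuity_2d_pt_id2 ].
  - apply filter_forall. intros. apply ex_RInt_continuous_R, continuous_R_of_derive.
    intro t. unfold f. assert (0 < 1 + t * t) by nra. auto_derive. lra.
Qed.

Lemma int_exp_sq_sqr_plus_compl x : int_exp_sq x * int_exp_sq x + int_exp_sq_compl x = PI / 4.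
Proof.
  set (h y := int_exp_sq y * int_exp_sq y + int_exp_sq_compl y).
  assert (Hh : forall y, is_derive h y 0).
  { intro y. unfold h.
    replace 0 with (exp (- (y * y)) * int_exp_sq y + int_exp_sq y * exp (- (y * y))
                    + -2 * exp (- (y * y)) * int_exp_sq y) by ring.
    apply (is_derive_plus (K := R_AbsRing) (V := R_NormedModule)).
    - apply (is_derive_mult (K := R_AbsRing)); try apply is_derive_int_exp_sq.
      intros; apply Rmult_comm.
    - apply is_derive_int_exp_sq_compl. }
  assert (Hh0 : h 0 = PI / 4).
  { unfold h, int_exp_sq, int_exp_sq_compl. rewrite RInt_point. unfold zero; simpl.
    rewrite (RInt_ext _ (fun t => / (1 + t ^ 2))).
    - rewrite (is_RInt_unique _ 0 1 (atan 1 - atan 0)), atan_1, atan_0; [lra |].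
      apply (is_RInt_derive (V := R_CompleteNormedModule) atan).
      + intros. apply is_derive_Reals, derivable_pt_lim_atan.
      + intros t _. apply (ex_derive_continuous (V := R_NormedModule)).
        assert (0 < 1 + t * t) by nra.
        auto_derive. simpl. lra.
    - intros t _. rewrite !Rmult_0_l, Ropp_0, exp_0. simpl. field. nra. }
  destruct (MVT_gen h 0 x (fun _ => 0)) as [c [_ Hc]].
  - intros; apply Hh.
  - intros. apply continuity_pt_filterlim, (ex_derive_continuous (V := R_NormedModule)).
    eexists; apply Hh.
  - change (h x = PI / 4). lra.
Qed.

Lemma int_exp_sq_compl_bounds x : 0 <= int_exp_sq_compl x <= exp (- (x * x)).
Proof.
  assert (Hc : continuous_R (fun t => exp (- (x * x * (1 + t * t))) / (1 + t * t))).
  { apply continuous_R_of_derive. intro t. assert (0 < 1 + t * t) by nra. auto_derive. lra. }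
  assert (Hb : forall t, 0 <= exp (- (x * x * (1 + t * t))) / (1 + t * t) <= exp (- (x * x))).
  { intro t. assert (0 < 1 + t * t) by nra. pose proof (exp_pos (- (x * x * (1 + t * t)))).
    split; [apply Rlt_le, Rdiv_lt_0_compat; lra |].
    apply Rle_trans with (exp (- (x * x * (1 + t * t)))).
    - apply Rmult_le_reg_r with (1 + t * t); [lra |]. field_simplify; nra.
    - apply exp_le_exp. nra. }
  unfold int_exp_sq_compl. split.
  - apply RInt_ge_0; auto using ex_RInt_continuous_R. lra. intros; apply Hb.
  - replace (exp (- (x * x))) with (RInt (fun _ => exp (- (x * x))) 0 1)
      by (rewrite (RInt_const (V := R_CompleteNormedModule)); unfold scal; simpl;
          unfold mult; simpl; ring).
    apply RInt_le_R; [lra | apply Hc | intro; apply continuous_const | intros; apply Hb].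
Qed.

Lemma sqrt_PI_gt_1 : 1 < sqrt PI.
Proof. rewrite <- sqrt_1. apply sqrt_lt_1_alt. pose proof PI_4. pose proof PI2_3_2. lra. Qed.

Lemma int_exp_sq_nonneg x : 0 <= x -> 0 <= int_exp_sq x.
Proof.
  intro Hx. apply RInt_ge_0; auto using ex_RInt_continuous_R, continuous_R_exp_sq.
  intros; apply Rlt_le, exp_pos.
Qed.

(* [B^2 - PI / 4 = - int_exp_sq_compl x] for [B = int_exp_sq x], and [B + sqrt PI / 2 > 1/2]. *)
Lemma int_exp_sq_close x : 0 <= x -> Rabs (int_exp_sq x - sqrt PI / 2) <= 2 * exp (- (x * x)).
Proof.
  intro Hx. pose proof (int_exp_sq_sqr_plus_compl x) as HB.
  pose proof (int_exp_sq_nonneg x Hx). pose proof (int_exp_sq_compl_bounds x).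
  pose proof sqrt_PI_gt_1. pose proof (sqrt_sqrt PI (Rlt_le _ _ PI_RGT_0)).
  set (B := int_exp_sq x) in *. set (c := sqrt PI / 2).
  assert (Hc : c * c = PI / 4) by (unfold c; nra).
  replace (B - c) with ((B * B - c * c) / (B + c)) by (field; unfold c; lra).
  replace (B * B - c * c) with (- int_exp_sq_compl x) by lra.
  rewrite Rabs_div, Rabs_Ropp, !Rabs_right by (unfold c; lra).
  apply Rmult_le_reg_r with (B + c); [unfold c; lra |].
  unfold Rdiv. rewrite Rmult_assoc, Rinv_l, Rmult_1_r by (unfold c; lra).
  pose proof (exp_pos (- (x * x))). unfold c. nra.
Qed.

Lemma int_exp_sq_opp x : int_exp_sq (- x) = - int_exp_sq x.
Proof.
  unfold int_exp_sq.
  pose proof (RInt_comp_lin (V := R_CompleteNormedModule)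
                (fun t => exp (- (t * t))) (-1) 0 0 x) as H.
  replace (-1 * 0 + 0) with 0 in H by ring. replace (-1 * x + 0) with (- x) in H by ring.
  rewrite <- H by apply ex_RInt_continuous_R, continuous_R_exp_sq.
  rewrite (RInt_ext _ (fun t => opp (exp (- (t * t))))).
  - apply (RInt_opp (V := R_CompleteNormedModule)).
    apply ex_RInt_continuous_R, continuous_R_exp_sq.
  - intros t _. unfold scal, opp; simpl; unfold mult; simpl.
    replace ((-1 * t + 0) * (-1 * t + 0)) with (t * t) by ring. ring.
Qed.

Lemma gauss_pos x : 0 < gauss x.
Proof. apply Rdiv_lt_0_compat; [apply exp_pos | apply sqrt_lt_R0; pose proof PI_RGT_0; lra]. Qed.

Lemma gauss_le x : gauss x <= exp (- (x * x / 2)).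
Proof.
  assert (H : 1 <= sqrt (2 * PI)).
  { rewrite <- sqrt_1. apply sqrt_le_1_alt. pose proof PI_4. pose proof PI2_3_2. lra. }
  unfold gauss. replace (- x ^ 2 / 2) with (- (x * x / 2)) by (simpl; field).
  pose proof (exp_pos (- (x * x / 2))).
  apply Rmult_le_reg_r with (sqrt (2 * PI)); [lra |].
  unfold Rdiv. rewrite Rmult_assoc, Rinv_l, Rmult_1_r by lra. nra.
Qed.

Lemma is_derive_gauss x : is_derive gauss x (- x * gauss x).
Proof.
  unfold gauss. assert (0 < sqrt (2 * PI)) by (apply sqrt_lt_R0; pose proof PI_RGT_0; lra).
  auto_derive; [lra |].
  replace (- (x * (x * 1)) * / 2) with (- x ^ 2 / 2) by (simpl; field). field. lra.
Qed.

Lemma continuous_R_gauss : continuous_R gauss.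
Proof. apply continuous_R_of_derive. intro; eexists; apply is_derive_gauss. Qed.

Lemma RInt_gauss a b :
  RInt gauss a b = (int_exp_sq (b / sqrt 2) - int_exp_sq (a / sqrt 2)) / sqrt PI.
Proof.
  assert (H2 : 0 < sqrt 2) by (apply sqrt_lt_R0; lra).
  assert (H22 : sqrt 2 * sqrt 2 = 2) by (apply sqrt_sqrt; lra).
  pose proof sqrt_PI_gt_1.
  set (f t := exp (- (t * t))).
  assert (Hf : forall u v, ex_RInt f u v)
    by (intros; apply ex_RInt_continuous_R, continuous_R_exp_sq).
  assert (Hsub : RInt (fun t => scal (/ sqrt 2) (f (/ sqrt 2 * t + 0))) a b
                 = RInt f (a / sqrt 2) (b / sqrt 2)).
  { pose proof (RInt_comp_lin (V := R_CompleteNormedModule) f (/ sqrt 2) 0 a b) as E.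
    replace (/ sqrt 2 * a + 0) with (a / sqrt 2) in E by (unfold Rdiv; ring).
    replace (/ sqrt 2 * b + 0) with (b / sqrt 2) in E by (unfold Rdiv; ring).
    apply E, Hf. }
  assert (Hg : forall t, gauss t = / sqrt PI * (/ sqrt 2 * f (/ sqrt 2 * t + 0))).
  { intro t. unfold gauss, f. rewrite sqrt_mult by (pose proof PI_RGT_0; lra).
    replace ((/ sqrt 2 * t + 0) * (/ sqrt 2 * t + 0)) with (t * t / (sqrt 2 * sqrt 2))
      by (field; lra).
    rewrite H22. replace (- t ^ 2 / 2) with (- (t * t / 2)) by (simpl; field). field. lra. }
  rewrite (RInt_ext gauss (fun t => scal (/ sqrt PI) (scal (/ sqrt 2) (f (/ sqrt 2 * t + 0)))))
    by (intros; apply Hg).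
  rewrite (RInt_scal (V := R_CompleteNormedModule)), Hsub.
  2: { apply (ex_RInt_comp_lin f). apply Hf. }
  rewrite <- (RInt_Chasles_R f _ 0) by apply continuous_R_exp_sq.
  rewrite <- (opp_RInt_swap (V := R_CompleteNormedModule) f 0) by apply Hf.
  unfold int_exp_sq. fold f.
  change (/ sqrt PI * (- RInt f 0 (a / sqrt 2) + RInt f 0 (b / sqrt 2))
          = (RInt f 0 (b / sqrt 2) - RInt f 0 (a / sqrt 2)) / sqrt PI).
  field. lra.
Qed.

Lemma RInt_gauss_close a b : 0 <= a -> 0 <= b ->
  Rabs (RInt gauss (- a) b - 1) <= 2 * exp (- (a * a / 2)) + 2 * exp (- (b * b / 2)).
Proof.
  intros Ha Hb. rewrite RInt_gauss.
  assert (H2 : 0 < sqrt 2) by (apply sqrt_lt_R0; lra).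
  assert (H22 : sqrt 2 * sqrt 2 = 2) by (apply sqrt_sqrt; lra).
  assert (Hsq : forall x, x / sqrt 2 * (x / sqrt 2) = x * x / 2).
  { intro x. rewrite <- H22 at 3. field. lra. }
  pose proof sqrt_PI_gt_1.
  pose proof (int_exp_sq_close (a / sqrt 2)) as Ca.
  pose proof (int_exp_sq_close (b / sqrt 2)) as Cb.
  rewrite Hsq in Ca, Cb.
  specialize (Ca (Rdiv_le_0_compat _ _ Ha H2)). specialize (Cb (Rdiv_le_0_compat _ _ Hb H2)).
  replace (- a / sqrt 2) with (- (a / sqrt 2)) by (field; lra). rewrite int_exp_sq_opp.
  set (ea := int_exp_sq (a / sqrt 2) - sqrt PI / 2) in *.
  set (eb := int_exp_sq (b / sqrt 2) - sqrt PI / 2) in *.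
  replace ((int_exp_sq (b / sqrt 2) - - int_exp_sq (a / sqrt 2)) / sqrt PI - 1)
    with ((ea + eb) / sqrt PI) by (unfold ea, eb; field; lra).
  rewrite Rabs_div, (Rabs_right (sqrt PI)) by lra.
  pose proof (Rabs_triang ea eb). pose proof (Rabs_pos (ea + eb)).
  apply Rmult_le_reg_r with (sqrt PI); [lra |].
  unfold Rdiv. rewrite Rmult_assoc, Rinv_l, Rmult_1_r by lra.
  pose proof (exp_pos (- (a * a / 2))). pose proof (exp_pos (- (b * b / 2))). nra.
Qed.

(** * Improper integrals over the real line *)

Lemma Defs_is_RInt_iff f a b v : Defs.is_RInt f a b v <-> ex_RInt f a b /\ RInt f a b = v.
Proof.
  split.
  - intros [pr Hpr]. split; [apply ex_RInt_Reals_1, pr |]. rewrite (RInt_Reals _ _ _ pr). auto.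
  - intros [H1 H2]. exists (ex_RInt_Reals_0 _ _ _ H1). rewrite <- RInt_Reals. auto.
Qed.

Lemma is_RInt_R_iff f l : is_RInt_R f l <->
  forall eps, 0 < eps -> exists A, forall a b, A <= a -> A <= b ->
    ex_RInt f (- a) b /\ Rabs (RInt f (- a) b - l) < eps.
Proof.
  split; intros H eps He; destruct (H eps He) as [A HA]; exists A; intros a b Ha Hb.
  - destruct (HA a b Ha Hb) as [v [Hv1 Hv2]]. apply Defs_is_RInt_iff in Hv1.
    destruct Hv1 as [H1 <-]. auto.
  - destruct (HA a b Ha Hb) as [H1 H2]. exists (RInt f (- a) b).
    split; auto. apply Defs_is_RInt_iff; auto.
Qed.

Lemma is_RInt_R_ext f g l : (forall x, f x = g x) -> is_RInt_R f l -> is_RInt_R g l.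
Proof. intro E. replace g with f by (apply functional_extensionality, E). auto. Qed.

Lemma is_RInt_R_lin f g l l' c :
  is_RInt_R f l -> is_RInt_R g l' -> is_RInt_R (fun x => f x + c * g x) (l + c * l').
Proof.
  rewrite !is_RInt_R_iff. intros Hf Hg eps He.
  assert (Hc : 0 < Rabs c + 1) by (pose proof (Rabs_pos c); lra).
  destruct (Hf (eps / 2)) as [A1 H1]; [lra |].
  destruct (Hg (eps / (2 * (Rabs c + 1)))) as [A2 H2]; [apply Rdiv_lt_0_compat; lra |].
  exists (Rmax A1 A2). intros a b Ha Hb.
  destruct (H1 a b) as [E1 B1]; try (eapply Rle_trans; [apply Rmax_l | eauto]).
  destruct (H2 a b) as [E2 B2]; try (eapply Rle_trans; [apply Rmax_r | eauto]).
  assert (Eg : ex_RInt (fun x => c * g x) (- a) b)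
    by (apply (ex_RInt_scal (V := R_NormedModule) g); auto).
  split; [apply (ex_RInt_plus (V := R_NormedModule) f); auto |].
  rewrite (RInt_plus (V := R_CompleteNormedModule) f (fun x => c * g x)),
          (RInt_scal (V := R_CompleteNormedModule) g) by auto.
  change (Rabs (RInt f (- a) b + c * RInt g (- a) b - (l + c * l')) < eps).
  replace (RInt f (- a) b + c * RInt g (- a) b - (l + c * l'))
    with ((RInt f (- a) b - l) + c * (RInt g (- a) b - l')) by ring.
  eapply Rle_lt_trans; [apply Rabs_triang |]. rewrite Rabs_mult.
  assert (Rabs c * Rabs (RInt g (- a) b - l') <= eps / 2).
  { apply Rle_trans with ((Rabs c + 1) * (eps / (2 * (Rabs c + 1)))); [| right; field; lra].
    pose proof (Rabs_pos c). pose proof (Rabs_pos (RInt g (- a) b - l')). nra. }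
  lra.
Qed.

Lemma is_RInt_R_scal f l c : is_RInt_R f l -> is_RInt_R (fun x => c * f x) (c * l).
Proof.
  intro H. replace (c * l) with (l + (c - 1) * l) by ring.
  apply (is_RInt_R_ext (fun x => f x + (c - 1) * f x)); [intro; ring |].
  apply is_RInt_R_lin; auto.
Qed.

Lemma is_RInt_R_le f g l l' :
  (forall x, f x <= g x) -> is_RInt_R f l -> is_RInt_R g l' -> l <= l'.
Proof.
  rewrite !is_RInt_R_iff. intros Hfg Hf Hg. apply Rnot_lt_le. intro Hlt.
  destruct (Hf ((l - l') / 2)) as [A1 H1]; [lra |].
  destruct (Hg ((l - l') / 2)) as [A2 H2]; [lra |].
  set (a := Rmax 0 (Rmax A1 A2)).
  assert (Ha1 : A1 <= a) by (unfold a; eapply Rle_trans; [apply (Rmax_l A1 A2) | apply Rmax_r]).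
  assert (Ha2 : A2 <= a) by (unfold a; eapply Rle_trans; [apply (Rmax_r A1 A2) | apply Rmax_r]).
  assert (Ha : 0 <= a) by apply Rmax_l.
  destruct (H1 a a Ha1 Ha1) as [E1 B1]. destruct (H2 a a Ha2 Ha2) as [E2 B2].
  assert (RInt f (- a) a <= RInt g (- a) a) by (apply RInt_le; auto; lra).
  apply Rabs_def2 in B1. apply Rabs_def2 in B2. lra.
Qed.

Definition exp_decay (f : R -> R) (K : R) : Prop := forall x, Rabs (f x) <= K * exp (- Rabs x).

Lemma exp_decay_nonneg f K : exp_decay f K -> 0 <= K.
Proof.
  intro H. specialize (H 0). pose proof (Rabs_pos (f 0)). pose proof (exp_pos (- Rabs 0)). nra.
Qed.

Lemma RInt_tail_le f K p q : continuous_R f -> exp_decay f K -> 0 <= p <= q ->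
  Rabs (RInt f p q) <= K * exp (- p).
Proof.
  intros Hc Hd Hpq. pose proof (exp_decay_nonneg f K Hd).
  assert (HE : RInt (fun x => K * exp (- x)) p q = K * exp (- p) - K * exp (- q)).
  { apply is_RInt_unique.
    replace (K * exp (- p) - K * exp (- q)) with (minus (- K * exp (- q)) (- K * exp (- p)))
      by (unfold minus, plus, opp; simpl; ring).
    apply (is_RInt_derive (V := R_CompleteNormedModule) (fun x => - K * exp (- x))).
    - intros x _. auto_derive; auto. ring.
    - intros x _. apply (ex_derive_continuous (V := R_NormedModule)). auto_derive. auto. }
  eapply Rle_trans; [apply abs_RInt_le; [lra | apply ex_RInt_continuous_R, Hc] |].
  eapply Rle_trans; [apply RInt_le_R with (g := fun x => K * exp (- x)); [lra | | |] |].
  - intro x. apply (continuous_comp f Rabs); [apply Hc | apply continuous_Rabs].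
  - apply continuous_R_of_derive. intro; auto_derive; auto.
  - intros x Hx. rewrite <- (Rabs_right x) at 2 by lra. apply Hd.
  - rewrite HE. pose proof (exp_pos (- q)). nra.
Qed.

Lemma RInt_opp_var f a b : continuous_R f -> RInt f (- b) (- a) = RInt (fun x => f (- x)) a b.
Proof.
  intro Hc.
  pose proof (RInt_comp_lin (V := R_CompleteNormedModule) f (-1) 0 a b) as E.
  replace (-1 * a + 0) with (- a) in E by ring. replace (-1 * b + 0) with (- b) in E by ring.
  rewrite <- (opp_RInt_swap (V := R_CompleteNormedModule)), <- E
    by apply ex_RInt_continuous_R, Hc.
  rewrite <- (RInt_opp (V := R_CompleteNormedModule)).
  - apply RInt_ext. intros x _. unfold opp, scal; simpl; unfold mult; simpl.
    replace (-1 * x + 0) with (- x) by ring. ring.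
  - apply (ex_RInt_comp_lin f). apply ex_RInt_continuous_R, Hc.
Qed.

Lemma RInt_window_close f K A a b : continuous_R f -> exp_decay f K -> 0 <= A -> A <= a -> A <= b ->
  Rabs (RInt f (- a) b - RInt f (- A) A) <= 2 * K * exp (- A).
Proof.
  intros Hc Hd HA Ha Hb.
  rewrite <- (RInt_Chasles_R f (- a) (- A) b), <- (RInt_Chasles_R f (- A) A b) by auto.
  replace (RInt f (- a) (- A) + (RInt f (- A) A + RInt f A b) - RInt f (- A) A)
    with (RInt f (- a) (- A) + RInt f A b) by ring.
  pose proof (RInt_tail_le f K A b Hc Hd (conj HA Hb)).
  rewrite RInt_opp_var by auto.
  assert (Hc' : continuous_R (fun x => f (- x))).
  { intro x. apply (continuous_comp Ropp f); [| apply Hc].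
    apply (continuous_opp (V := R_NormedModule) (fun y => y)), continuous_id. }
  assert (Hd' : exp_decay (fun x => f (- x)) K)
    by (intro x; cbv beta; rewrite <- (Rabs_Ropp x); apply Hd).
  pose proof (RInt_tail_le _ K A a Hc' Hd' (conj HA Ha)).
  eapply Rle_trans; [apply Rabs_triang | lra].
Qed.

Lemma exp_opp_small eps : 0 < eps -> exists A, 0 <= A /\ forall x, A <= x -> exp (- x) < eps.
Proof.
  intro He. exists (/ eps). split; [apply Rlt_le, Rinv_0_lt_compat, He |].
  intros x Hx. pose proof (Rinv_0_lt_compat _ He). pose proof (exp_ineq1_le x).
  rewrite exp_Ropp. rewrite <- (Rinv_inv eps).
  apply Rinv_lt_contravar; [apply Rmult_lt_0_compat; lra | lra].
Qed.

Lemma is_RInt_R_exists_exp_decay f K : continuous_R f -> exp_decay f K -> exists l, is_RInt_R f l.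
Proof.
  intros Hc Hd. pose proof (exp_decay_nonneg f K Hd).
  set (u (n : nat) := RInt f (- INR n) (INR n)).
  assert (Hu : forall N n, (N <= n)%nat -> Rabs (u n - u N) <= 2 * K * exp (- INR N)).
  { intros N n Hn. apply RInt_window_close; auto using pos_INR, le_INR. }
  assert (Hsmall : forall eps, 0 < eps -> exists N : nat, 4 * K * exp (- INR N) < eps).
  { intros eps He. destruct (exp_opp_small (eps / (4 * K + 1))) as [A [_ HA]].
    { apply Rdiv_lt_0_compat; lra. }
    destruct (INR_unbounded A) as [N HN]. exists N.
    specialize (HA (INR N) (Rlt_le _ _ HN)). pose proof (exp_pos (- INR N)).
    apply Rle_lt_trans with ((4 * K + 1) * exp (- INR N)); [nra |].
    apply Rmult_lt_reg_r with (/ (4 * K + 1)); [apply Rinv_0_lt_compat; lra |].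
    replace ((4 * K + 1) * exp (- INR N) * / (4 * K + 1)) with (exp (- INR N)) by (field; lra).
    exact HA. }
  destruct (Rcomplete.R_complete u) as [l Hl].
  - intros eps He. destruct (Hsmall eps He) as [N HN]. exists N. intros n m Hn Hm.
    unfold Rdist. pose proof (Hu N n Hn). pose proof (Hu N m Hm).
    replace (u n - u m) with ((u n - u N) - (u m - u N)) by ring.
    eapply Rle_lt_trans; [apply Rabs_triang | rewrite Rabs_Ropp; lra].
  - exists l. apply is_RInt_R_iff. intros eps He.
    destruct (Hsmall (eps / 2)) as [N HN]; [lra |].
    destruct (Hl (eps / 2)) as [M HM]; [lra |].
    exists (INR N). intros a b Ha Hb. split; [apply ex_RInt_continuous_R, Hc |].
    pose proof (RInt_window_close f K (INR N) a b Hc Hd (pos_INR N) Ha Hb) as H1.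
    specialize (HM (max N M) (Nat.le_max_r _ _)). unfold Rdist in HM.
    pose proof (Hu N (max N M) (Nat.le_max_l _ _)) as H2. fold (u N) in H1.
    replace (RInt f (- a) b - l)
      with ((RInt f (- a) b - u N) - (u (max N M) - u N) + (u (max N M) - l)) by ring.
    eapply Rle_lt_trans; [apply Rabs_triang |].
    eapply Rle_lt_trans; [apply Rplus_le_compat_r, Rabs_triang |].
    rewrite Rabs_Ropp. pose proof (exp_pos (- INR N)). lra.
Qed.

(** * Gaussian moments *)

Lemma one_plus_pow_le_exp b k : 0 <= b -> (1 + b) ^ k <= exp (INR k * b).
Proof.
  intro Hb. induction k as [| k IH].
  - simpl. rewrite Rmult_0_l, exp_0. lra.
  - rewrite S_INR, Rmult_plus_distr_r, Rmult_1_l, exp_plus. simpl.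
    rewrite (Rmult_comm (exp _)). pose proof (exp_ineq1_le b). pose proof (pow_le (1 + b) k).
    apply Rmult_le_compat; lra.
Qed.

Lemma poly_exp_sq_small k eps : 0 < eps ->
  exists A, forall x, A <= Rabs x -> (1 + Rabs x) ^ k * exp (- (x * x / 2)) < eps.
Proof.
  intro He. destruct (exp_opp_small eps He) as [A0 [HA0 HA]].
  exists (Rmax (2 * INR k + 2) A0). intros x Hx.
  pose proof (Rmax_l (2 * INR k + 2) A0). pose proof (Rmax_r (2 * INR k + 2) A0).
  pose proof (pos_INR k). pose proof (Rabs_pos x).
  assert (Hxx : x * x = Rabs x * Rabs x) by (rewrite <- Rabs_mult, Rabs_right; nra).
  apply Rle_lt_trans with (exp (- Rabs x)); [| apply HA; lra].
  eapply Rle_trans.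
  { apply Rmult_le_compat_r; [apply Rlt_le, exp_pos | apply one_plus_pow_le_exp, Rabs_pos]. }
  rewrite <- exp_plus. apply exp_le_exp. rewrite Hxx. nra.
Qed.

Lemma is_RInt_R_gauss : is_RInt_R gauss 1.
Proof.
  apply is_RInt_R_iff. intros eps He.
  destruct (poly_exp_sq_small 0 (eps / 5)) as [A HA]; [lra |].
  exists (Rmax 0 A). intros a b Ha Hb.
  pose proof (Rmax_l 0 A). pose proof (Rmax_r 0 A).
  split; [apply ex_RInt_continuous_R, continuous_R_gauss |].
  pose proof (RInt_gauss_close a b ltac:(lra) ltac:(lra)).
  assert (Ha' : A <= Rabs a) by (rewrite Rabs_right; lra).
  assert (Hb' : A <= Rabs b) by (rewrite Rabs_right; lra).
  pose proof (HA a Ha'). pose proof (HA b Hb'). simpl in *. lra.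
Qed.

Definition vanishes_at_infty (H : R -> R) : Prop :=
  forall eps, 0 < eps -> exists A, forall x, A <= Rabs x -> Rabs (H x) < eps.

Lemma vanishes_at_infty_poly_gauss H C k :
  (forall x, Rabs (H x) <= C * (1 + Rabs x) ^ k * gauss x) -> vanishes_at_infty H.
Proof.
  intros HH eps He.
  assert (HC : 0 < Rabs C + 1) by (pose proof (Rabs_pos C); lra).
  destruct (poly_exp_sq_small k (eps / (Rabs C + 1))) as [A HA]; [apply Rdiv_lt_0_compat; lra |].
  exists A. intros x Hx. specialize (HA x Hx).
  assert (Hp : 0 <= (1 + Rabs x) ^ k) by (apply pow_le; pose proof (Rabs_pos x); lra).
  pose proof (gauss_le x). pose proof (gauss_pos x). pose proof (Rle_abs C).
  apply Rle_lt_trans with ((Rabs C + 1) * ((1 + Rabs x) ^ k * exp (- (x * x / 2)))).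
  - eapply Rle_trans; [apply HH |]. rewrite Rmult_assoc.
    assert (0 <= (1 + Rabs x) ^ k * gauss x) by nra.
    assert ((1 + Rabs x) ^ k * gauss x <= (1 + Rabs x) ^ k * exp (- (x * x / 2)))
      by (apply Rmult_le_compat_l; lra).
    nra.
  - apply Rmult_lt_reg_l with (/ (Rabs C + 1)); [apply Rinv_0_lt_compat; lra |].
    rewrite <- Rmult_assoc, Rinv_l, Rmult_1_l by lra. unfold Rdiv in HA. lra.
Qed.

Lemma is_RInt_R_derive_vanishing H f : (forall x, is_derive H x (f x)) -> continuous_R f ->
  vanishes_at_infty H -> is_RInt_R f 0.
Proof.
  intros Hd Hc Hv. apply is_RInt_R_iff. intros eps He.
  destruct (Hv (eps / 2)) as [A HA]; [lra |].
  exists (Rmax 0 A). intros a b Ha Hb. pose proof (Rmax_l 0 A). pose proof (Rmax_r 0 A).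
  split; [apply ex_RInt_continuous_R, Hc |].
  rewrite (is_RInt_unique f (- a) b (minus (H b) (H (- a)))).
  - unfold minus, plus, opp; simpl. rewrite Rminus_0_r.
    pose proof (HA b ltac:(rewrite Rabs_right; lra)).
    pose proof (HA (- a) ltac:(rewrite Rabs_Ropp, Rabs_right; lra)).
    pose proof (Rabs_triang (H b) (- H (- a))). rewrite Rabs_Ropp in *. lra.
  - apply (is_RInt_derive (V := R_CompleteNormedModule)); intros; [apply Hd | apply Hc].
Qed.

Lemma is_RInt_R_gauss_poly4 a b c :
  is_RInt_R (fun x => gauss x * (a * x ^ 4 + b * x ^ 2 + c)) (3 * a + b + c).
Proof.
  set (H2 x := - x * gauss x). set (H4 x := - (x ^ 3 + 3 * x) * gauss x).
  assert (V2 : vanishes_at_infty H2).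
  { apply (vanishes_at_infty_poly_gauss _ 1 1). intro x. unfold H2.
    rewrite Rabs_mult, Rabs_Ropp, (Rabs_right (gauss x)) by (apply Rle_ge, Rlt_le, gauss_pos).
    pose proof (gauss_pos x). simpl. nra. }
  assert (V4 : vanishes_at_infty H4).
  { apply (vanishes_at_infty_poly_gauss _ 4 3). intro x. unfold H4.
    rewrite Rabs_mult, Rabs_Ropp, (Rabs_right (gauss x)) by (apply Rle_ge, Rlt_le, gauss_pos).
    pose proof (gauss_pos x). apply Rmult_le_compat_r; [lra |].
    unfold Rabs at 1 2; destruct (Rcase_abs (x ^ 3 + 3 * x)), (Rcase_abs x); simpl; nra. }
  assert (I2 : is_RInt_R (fun x => gauss x * (x ^ 2 - 1)) 0).
  { apply (is_RInt_R_derive_vanishing H2); auto.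
    - intro x. unfold H2. eapply is_derive_ext; [intro; reflexivity |].
      replace (gauss x * (x ^ 2 - 1)) with (-1 * gauss x + - x * (- x * gauss x)) by ring.
      apply (is_derive_mult (K := R_AbsRing) (fun x => - x)); [auto_derive; auto | | ];
        [apply is_derive_gauss | intros; apply Rmult_comm].
    - apply continuous_R_mult; [apply continuous_R_gauss |].
      apply continuous_R_of_derive. intro; auto_derive; auto. }
  assert (I4 : is_RInt_R (fun x => gauss x * (x ^ 4 - 3)) 0).
  { apply (is_RInt_R_derive_vanishing H4); auto.
    - intro x. unfold H4. eapply is_derive_ext; [intro; reflexivity |].
      replace (gauss x * (x ^ 4 - 3))
        with (- (3 * x ^ 2 + 3) * gauss x + - (x ^ 3 + 3 * x) * (- x * gauss x)) by ring.
      apply (is_derive_mult (K := R_AbsRing) (fun x => - (x ^ 3 + 3 * x)));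
        [auto_derive; auto; simpl; ring | apply is_derive_gauss | intros; apply Rmult_comm].
    - apply continuous_R_mult; [apply continuous_R_gauss |].
      apply continuous_R_of_derive. intro; auto_derive; auto. }
  pose proof (is_RInt_R_lin _ _ _ _ b (is_RInt_R_lin _ _ _ _ a
                (is_RInt_R_scal _ _ (3 * a + b + c) is_RInt_R_gauss) I4) I2) as H.
  replace (3 * a + b + c) with ((3 * a + b + c) * 1 + a * 0 + b * 0) by ring.
  eapply is_RInt_R_ext; [| exact H]. intro x. cbv beta. ring.
Qed.

Lemma lsum_cons {A : Type} (f : A -> R) a l : lsum f (a :: l) = f a + lsum f l.
Proof. reflexivity. Qed.

Lemma lsum_app {A : Type} (f : A -> R) l l' : lsum f (l ++ l') = lsum f l + lsum f l'.
Proof.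
  induction l as [| a l IH]; [unfold lsum; simpl; ring | simpl; rewrite !lsum_cons, IH; ring].
Qed.

Lemma lsum_ext_in {A : Type} (f g : A -> R) l :
  (forall a, In a l -> f a = g a) -> lsum f l = lsum g l.
Proof.
  induction l as [| a l IH]; intro H; [reflexivity |].
  rewrite !lsum_cons, H, IH; auto using in_eq, in_cons.
Qed.

Lemma lsum_le {A : Type} (f g : A -> R) l :
  (forall a, In a l -> f a <= g a) -> lsum f l <= lsum g l.
Proof.
  induction l as [| a l IH]; intro H; [unfold lsum; simpl; lra |].
  rewrite !lsum_cons. pose proof (H a (in_eq a l)).
  pose proof (IH (fun b Hb => H b (in_cons a b l Hb))).
  lra.
Qed.

Lemma lsum_nonneg {A : Type} (f : A -> R) l : (forall a, 0 <= f a) -> 0 <= lsum f l.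
Proof.
  intro H. replace 0 with (lsum (fun _ : A => 0) l).
  - apply lsum_le. auto.
  - induction l as [| a l IH]; [reflexivity | rewrite lsum_cons, IH; ring].
Qed.

Lemma lsum_const {A : Type} (c : R) l : lsum (fun _ : A => c) l = INR (length l) * c.
Proof.
  induction l as [| a l IH]; [unfold lsum; simpl; ring |].
  rewrite lsum_cons, IH. simpl length. rewrite S_INR. ring.
Qed.

Lemma lsum_lin {A : Type} (f g : A -> R) a l :
  lsum (fun x => f x + a * g x) l = lsum f l + a * lsum g l.
Proof. induction l as [| x l IH]; [unfold lsum; simpl; ring | rewrite !lsum_cons, IH; ring]. Qed.

Lemma Rabs_lsum_le {A : Type} (f : A -> R) l : Rabs (lsum f l) <= lsum (fun a => Rabs (f a)) l.
Proof.
  induction l as [| a l IH]; [unfold lsum; simpl; rewrite Rabs_R0; lra |].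
  rewrite !lsum_cons. eapply Rle_trans; [apply Rabs_triang | lra].
Qed.

Lemma lsum_seq_S0 (f : nat -> R) k : lsum f (seq 0 (S k)) = f O + lsum (fun j => f (S j)) (seq 0 k).
Proof. simpl seq. rewrite lsum_cons, <- seq_shift. unfold lsum. rewrite map_map. reflexivity. Qed.

Lemma lsum_seq_last (f : nat -> R) k : lsum f (seq 0 (S k)) = lsum f (seq 0 k) + f k.
Proof. rewrite seq_S, lsum_app. unfold lsum at 2. simpl. ring. Qed.

Lemma lsum_seq_mono (f : nat -> R) j k : (j <= k)%nat -> (forall i, 0 <= f i) ->
  lsum f (seq 0 j) <= lsum f (seq 0 k).
Proof.
  intros Hjk Hf. induction Hjk as [| k _ IH]; [lra |].
  rewrite lsum_seq_last. pose proof (Hf k). lra.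
Qed.

Lemma lsum_INR_seq n : lsum INR (seq 0 n) = INR n * (INR n - 1) / 2.
Proof.
  induction n as [| n IH]; [unfold lsum; simpl; field |].
  rewrite lsum_seq_last, IH, S_INR. field.
Qed.

(** * Iterated Gaussian expectations *)

Lemma gexp_ext k F F' l : (forall g, F g = F' g) -> gexp k F l -> gexp k F' l.
Proof. intro E. replace F' with F by (apply functional_extensionality, E). auto. Qed.

Lemma gexp_lin k : forall F F' l l' c, gexp k F l -> gexp k F' l' ->
  gexp k (fun g => F g + c * F' g) (l + c * l').
Proof.
  induction k as [| k IH]; intros F F' l l' c H H'; simpl in *.
  - subst; reflexivity.
  - destruct H as [G [HG HI]], H' as [G' [HG' HI']].
    exists (fun x => G x + c * G' x). split.
    + intro x. apply (IH (fun g => F (gcons x g)) (fun g => F' (gcons x g))); auto.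
    + eapply is_RInt_R_ext; [| apply (is_RInt_R_lin _ _ _ _ c HI HI')].
      intro x. simpl. ring.
Qed.

Lemma gexp_le k : forall F F' l l', (forall g, F g <= F' g) ->
  gexp k F l -> gexp k F' l' -> l <= l'.
Proof.
  induction k as [| k IH]; intros F F' l l' Hle H H'; simpl in *.
  - subst; auto.
  - destruct H as [G [HG HI]], H' as [G' [HG' HI']].
    apply (is_RInt_R_le _ _ _ _ (fun x => Rmult_le_compat_l _ _ _ (Rlt_le _ _ (gauss_pos x))
             (IH _ _ _ _ (fun g => Hle (gcons x g)) (HG x) (HG' x))) HI HI').
Qed.

Lemma gexp_const k c : gexp k (fun _ => c) c.
Proof.
  induction k as [| k IH]; simpl; [reflexivity |].
  exists (fun _ => c). split; [auto |].
  pose proof (is_RInt_R_gauss_poly4 0 0 c) as H. replace (3 * 0 + 0 + c) with c in H by ring.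
  eapply is_RInt_R_ext; [| exact H]. intro x. cbv beta. ring.
Qed.

Lemma gexp_scal k F l c : gexp k F l -> gexp k (fun g => c * F g) (c * l).
Proof.
  intro H. replace (c * l) with (0 + c * l) by ring.
  apply (gexp_ext k (fun g => 0 + c * F g)); [intro; ring |].
  apply gexp_lin; [apply gexp_const | exact H].
Qed.

Lemma gexp_lsum {A : Type} k (F : A -> (nat -> R) -> R) (v : A -> R) l :
  (forall a, In a l -> gexp k (F a) (v a)) -> gexp k (fun g => lsum (fun a => F a g) l) (lsum v l).
Proof.
  induction l as [| a l IH]; intro H; [apply (gexp_const k 0) |].
  rewrite lsum_cons, <- (Rmult_1_l (lsum v l)).
  apply (gexp_ext k (fun g => F a g + 1 * lsum (fun a => F a g) l)).
  { intro g. rewrite lsum_cons. ring. }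
  apply gexp_lin; [apply H, in_eq | apply IH; intros; apply H, in_cons; auto].
Qed.

Lemma gexp_abs_le k F W l w M : gexp k F l -> gexp k W w ->
  (forall g, Rabs (F g) <= M * W g) -> Rabs l <= M * w.
Proof.
  intros HF HW Hb. apply Rabs_le. split.
  - replace (- (M * w)) with (- M * w) by ring.
    apply (gexp_le k (fun g => - M * W g) F); auto using gexp_scal.
    intro g. specialize (Hb g). apply Rabs_le_between in Hb. lra.
  - apply (gexp_le k F (fun g => M * W g)); auto using gexp_scal.
    intro g. specialize (Hb g). apply Rabs_le_between in Hb. lra.
Qed.

(** * Existence of the iterated expectations *)

Definition abs_sum (k : nat) (g : nat -> R) : R := lsum (fun j => Rabs (g j)) (seq 0 k).

Definition abs_dist (k : nat) (g g' : nat -> R) : R :=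
  lsum (fun j => Rabs (g j - g' j)) (seq 0 k).

Lemma abs_sum_nonneg k g : 0 <= abs_sum k g.
Proof. apply lsum_nonneg. intro; apply Rabs_pos. Qed.

Lemma abs_dist_nonneg k g g' : 0 <= abs_dist k g g'.
Proof. apply lsum_nonneg. intro; apply Rabs_pos. Qed.

Lemma abs_sum_gcons k x g : abs_sum (S k) (gcons x g) = Rabs x + abs_sum k g.
Proof. apply lsum_seq_S0. Qed.

Lemma abs_dist_gcons k x y g g' :
  abs_dist (S k) (gcons x g) (gcons y g') = Rabs (x - y) + abs_dist k g g'.
Proof. apply lsum_seq_S0. Qed.

Lemma abs_dist_refl k g : abs_dist k g g = 0.
Proof.
  unfold abs_dist. rewrite (lsum_ext_in _ (fun _ => 0)), lsum_const; [ring |].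
  intros. rewrite Rminus_diag, Rabs_R0. reflexivity.
Qed.

(* [-x^2/2 + c|x| <= (c+1)^2/2 - |x|] *)
Lemma is_RInt_R_gauss_exp_growth G C c : continuous_R G ->
  (forall x, Rabs (G x) <= C * exp (c * Rabs x)) -> exists l, is_RInt_R (fun x => gauss x * G x) l.
Proof.
  intros HG Hb. apply (is_RInt_R_exists_exp_decay _ (C * exp ((c + 1) * (c + 1) / 2))).
  { apply continuous_R_mult; [apply continuous_R_gauss | exact HG]. }
  intro x. rewrite Rabs_mult, (Rabs_right (gauss x)) by (apply Rle_ge, Rlt_le, gauss_pos).
  pose proof (Hb x). pose proof (gauss_le x). pose proof (gauss_pos x).
  pose proof (Rabs_pos (G x)). pose proof (exp_pos (c * Rabs x)).
  assert (HC : 0 <= C) by nra.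
  apply Rle_trans with (exp (- (x * x / 2)) * (C * exp (c * Rabs x))).
  { apply Rmult_le_compat; lra. }
  rewrite Rmult_assoc, (Rmult_comm (exp _) (C * _)), !Rmult_assoc, <- !exp_plus.
  apply Rmult_le_compat_l; [exact HC |]. apply exp_le_exp.
  assert (x * x = Rabs x * Rabs x) by (rewrite <- Rabs_mult, Rabs_right; nra).
  pose proof (Rle_0_sqr (Rabs x - (c + 1))). unfold Rsqr in *. nra.
Qed.

Lemma gexp_exp_abs_sum k a r : is_RInt_R (fun x => gauss x * exp (a * Rabs x)) r ->
  gexp k (fun g => exp (a * abs_sum k g)) (r ^ k).
Proof.
  intro Hr. induction k as [| k IH].
  - simpl. unfold abs_sum. simpl. rewrite Rmult_0_r, exp_0. reflexivity.
  - exists (fun x => exp (a * Rabs x) * r ^ k). split.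
    + intro x. eapply gexp_ext; [| apply (gexp_scal _ _ _ (exp (a * Rabs x)) IH)].
      intro g. rewrite abs_sum_gcons, <- exp_plus. f_equal. ring.
    + replace (r ^ S k) with (r ^ k * r) by (simpl; ring).
      eapply is_RInt_R_ext; [| apply (is_RInt_R_scal _ _ (r ^ k) Hr)].
      intro x. cbv beta. ring.
Qed.

Lemma continuous_R_of_holder G C c : 0 <= c ->
  (forall x y, Rabs (G y - G x) <= C * exp (c * (Rabs x + Rabs y)) * sqrt (Rabs (y - x))) ->
  continuous_R G.
Proof.
  intros Hc HG x. apply (proj1 (continuity_pt_filterlim G x)). intros eps He.
  set (B := Rabs C * exp (c * (2 * Rabs x + 1)) + 1).
  assert (HB : 0 < B)
    by (unfold B; pose proof (Rabs_pos C); pose proof (exp_pos (c * (2 * Rabs x + 1))); nra).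
  assert (Hd : 0 < eps / B) by (apply Rdiv_lt_0_compat; lra).
  exists (Rmin 1 (eps / B * (eps / B))). split; [apply Rmin_pos; nra |].
  intros y [_ Hy]. simpl in *. unfold R_dist in *.
  pose proof (Rmin_l 1 (eps / B * (eps / B))). pose proof (Rmin_r 1 (eps / B * (eps / B))).
  assert (Hs : sqrt (Rabs (y - x)) < eps / B).
  { rewrite <- (sqrt_square (eps / B)) by lra. apply sqrt_lt_1_alt. split; [apply Rabs_pos | lra]. }
  assert (HM : C * exp (c * (Rabs x + Rabs y)) <= B).
  { pose proof (Rabs_triang_inv y x). pose proof (Rle_abs C).
    assert (exp (c * (Rabs x + Rabs y)) <= exp (c * (2 * Rabs x + 1))) by (apply exp_le_exp; nra).
    pose proof (exp_pos (c * (Rabs x + Rabs y))). pose proof (Rabs_pos C). unfold B. nra. }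
  eapply Rle_lt_trans; [apply HG |]. pose proof (sqrt_pos (Rabs (y - x))).
  apply Rle_lt_trans with (B * sqrt (Rabs (y - x))); [apply Rmult_le_compat_r; lra |].
  replace eps with (B * (eps / B)) by (field; lra). apply Rmult_lt_compat_l; lra.
Qed.

Lemma continuous_R_exp_abs c : continuous_R (fun x => exp (c * Rabs x)).
Proof.
  intro x. apply (continuous_comp (fun x => c * Rabs x) exp); [| apply continuous_exp].
  apply (continuous_scal_r (K := R_AbsRing) (V := R_NormedModule) c Rabs), continuous_Rabs.
Qed.

(* The growth bound makes the partial integrals exist; the Hölder bound survives integrating out
   a variable and makes them continuous. *)
Definition tame (k : nat) (F : (nat -> R) -> R) : Prop :=
  exists C c, 0 <= C /\ 0 <= c /\ forall g g',
    Rabs (F g) <= C * exp (c * abs_sum k g) /\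
    Rabs (F g - F g') <= C * exp (c * (abs_sum k g + abs_sum k g')) * sqrt (abs_dist k g g').

Lemma tame_gcons k F x : tame (S k) F -> tame k (fun g => F (gcons x g)).
Proof.
  intros [C [c [HC [Hc H]]]]. exists (C * exp (2 * c * Rabs x)), c.
  split; [pose proof (exp_pos (2 * c * Rabs x)); nra |]. split; [exact Hc |].
  intros g g'. destruct (H (gcons x g) (gcons x g')) as [H1 H2].
  rewrite abs_sum_gcons in H1.
  rewrite !abs_sum_gcons, abs_dist_gcons, Rminus_diag, Rabs_R0, Rplus_0_l in H2.
  pose proof (abs_sum_nonneg k g). pose proof (abs_sum_nonneg k g'). pose proof (Rabs_pos x).
  split.
  - eapply Rle_trans; [apply H1 |]. rewrite Rmult_assoc, <- exp_plus.
    apply Rmult_le_compat_l; [exact HC |]. apply exp_le_exp. nra.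
  - eapply Rle_trans; [apply H2 |]. apply Rmult_le_compat_r; [apply sqrt_pos |].
    rewrite Rmult_assoc, <- exp_plus. apply Rmult_le_compat_l; [exact HC |].
    apply exp_le_exp. nra.
Qed.

Theorem tame_gexp_exists k : forall F, tame k F -> exists l, gexp k F l.
Proof.
  induction k as [| k IH]; intros F HF; [exists (F (fun _ => 0)); reflexivity |].
  assert (Hx : forall x, exists l, gexp k (fun g => F (gcons x g)) l)
    by (intro x; apply IH, tame_gcons, HF).
  set (G x := proj1_sig (constructive_indefinite_description _ (Hx x))).
  assert (HG : forall x, gexp k (fun g => F (gcons x g)) (G x))
    by (intro x; unfold G; destruct constructive_indefinite_description; auto).
  destruct HF as [C [c [HC [Hc H]]]].
  assert (Hr : forall a, exists r, is_RInt_R (fun x => gauss x * exp (a * Rabs x)) r).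
  { intro a. apply (is_RInt_R_gauss_exp_growth _ 1 a (continuous_R_exp_abs a)).
    intro x. rewrite Rabs_right, Rmult_1_l by (apply Rle_ge, Rlt_le, exp_pos). lra. }
  destruct (Hr c) as [r1 Hr1], (Hr (2 * c)) as [r2 Hr2].
  assert (Hbound : forall x, Rabs (G x) <= C * r1 ^ k * exp (c * Rabs x)).
  { intro x. replace (C * r1 ^ k * exp (c * Rabs x)) with (C * exp (c * Rabs x) * r1 ^ k) by ring.
    apply (gexp_abs_le k _ _ _ _ _ (HG x) (gexp_exp_abs_sum k c r1 Hr1)).
    intro g. destruct (H (gcons x g) (gcons x g)) as [H1 _]. rewrite abs_sum_gcons in H1.
    rewrite Rmult_assoc, <- exp_plus, <- Rmult_plus_distr_l. exact H1. }
  assert (Hholder : forall x y, Rabs (G y - G x)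
            <= C * r2 ^ k * exp (c * (Rabs x + Rabs y)) * sqrt (Rabs (y - x))).
  { intros x y. pose proof (gexp_lin k _ _ _ _ (-1) (HG y) (HG x)) as Hd.
    replace (C * r2 ^ k * exp (c * (Rabs x + Rabs y)) * sqrt (Rabs (y - x)))
      with (C * exp (c * (Rabs x + Rabs y)) * sqrt (Rabs (y - x)) * r2 ^ k) by ring.
    replace (G y - G x) with (G y + -1 * G x) by ring.
    apply (gexp_abs_le k _ _ _ _ _ Hd (gexp_exp_abs_sum k (2 * c) r2 Hr2)).
    intro g. destruct (H (gcons y g) (gcons x g)) as [_ H2].
    rewrite !abs_sum_gcons, abs_dist_gcons, abs_dist_refl, Rplus_0_r in H2.
    replace (F (gcons y g) + -1 * F (gcons x g)) with (F (gcons y g) - F (gcons x g)) by ring.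
    eapply Rle_trans; [apply H2 | right].
    replace (c * (Rabs y + abs_sum k g + (Rabs x + abs_sum k g)))
      with (c * (Rabs x + Rabs y) + 2 * c * abs_sum k g) by ring.
    rewrite exp_plus. ring. }
  destruct (is_RInt_R_gauss_exp_growth G _ c (continuous_R_of_holder G _ c Hc Hholder) Hbound)
    as [l Hl].
  exists l, G. split; auto.
Qed.

Lemma exp_mul_le_exp c c' s : c <= c' -> 0 <= s -> exp (c * s) <= exp (c' * s).
Proof. intros. apply exp_le_exp. nra. Qed.

Lemma tame_ext k F F' : (forall g, F g = F' g) -> tame k F -> tame k F'.
Proof. intro E. replace F' with F by (apply functional_extensionality, E). auto. Qed.

Lemma tame_const k c : tame k (fun _ => c).
Proof.
  exists (Rabs c), 0. do 2 (split; [first [apply Rabs_pos | lra] |]). intros g g'.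
  rewrite !Rmult_0_l, !exp_0, Rminus_diag, Rabs_R0. split; [lra |].
  pose proof (Rabs_pos c). pose proof (sqrt_pos (abs_dist k g g')). nra.
Qed.

Lemma tame_plus k F F' : tame k F -> tame k F' -> tame k (fun g => F g + F' g).
Proof.
  intros [C [c [HC [Hc H]]]] [C' [c' [HC' [Hc' H']]]].
  exists (C + C'), (c + c'). split; [lra |]. split; [lra |]. intros g g'.
  destruct (H g g') as [H1 H2], (H' g g') as [H1' H2'].
  pose proof (abs_sum_nonneg k g). pose proof (abs_sum_nonneg k g').
  pose proof (sqrt_pos (abs_dist k g g')).
  assert (Hs' : 0 <= abs_sum k g + abs_sum k g') by lra.
  set (s := abs_sum k g) in *. set (s' := s + abs_sum k g') in *.
  pose proof (exp_mul_le_exp c (c + c') s ltac:(lra) ltac:(lra)).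
  pose proof (exp_mul_le_exp c' (c + c') s ltac:(lra) ltac:(lra)).
  pose proof (exp_mul_le_exp c (c + c') s' ltac:(lra) Hs').
  pose proof (exp_mul_le_exp c' (c + c') s' ltac:(lra) Hs').
  split.
  - eapply Rle_trans; [apply Rabs_triang | nra].
  - replace (F g + F' g - (F g' + F' g')) with ((F g - F g') + (F' g - F' g')) by ring.
    eapply Rle_trans; [apply Rabs_triang |].
    assert (C * exp (c * s') <= C * exp ((c + c') * s')) by (apply Rmult_le_compat_l; lra).
    assert (C' * exp (c' * s') <= C' * exp ((c + c') * s')) by (apply Rmult_le_compat_l; lra).
    nra.
Qed.

Lemma tame_scal k F a : tame k F -> tame k (fun g => a * F g).
Proof.
  intros [C [c [HC [Hc H]]]]. pose proof (Rabs_pos a).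
  exists (Rabs a * C), c. split; [nra |]. split; [exact Hc |]. intros g g'.
  destruct (H g g') as [H1 H2]. rewrite <- Rmult_minus_distr_l, !Rabs_mult, !Rmult_assoc.
  split; apply Rmult_le_compat_l; auto. rewrite <- Rmult_assoc. exact H2.
Qed.

Lemma tame_mul k F F' : tame k F -> tame k F' -> tame k (fun g => F g * F' g).
Proof.
  intros [C [c [HC [Hc H]]]] [C' [c' [HC' [Hc' H']]]].
  exists (2 * C * C'), (c + c'). split; [nra |]. split; [lra |]. intros g g'.
  destruct (H g g') as [H1 H2], (H' g g') as [H1' H2'], (H' g' g) as [H1'' _].
  pose proof (abs_sum_nonneg k g). pose proof (abs_sum_nonneg k g').
  pose proof (sqrt_pos (abs_dist k g g')).
  pose proof (Rabs_pos (F g)). pose proof (Rabs_pos (F' g')).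
  set (s := abs_sum k g) in *. set (s' := abs_sum k g') in *.
  set (q := sqrt (abs_dist k g g')) in *.
  assert (Hcc : C * C' * exp ((c + c') * s) <= 2 * C * C' * exp ((c + c') * s)).
  { pose proof (exp_pos ((c + c') * s)). assert (0 <= C * C') by nra. nra. }
  split.
  - rewrite Rabs_mult. eapply Rle_trans; [| exact Hcc].
    replace (C * C' * exp ((c + c') * s)) with (C * exp (c * s) * (C' * exp (c' * s)))
      by (rewrite Rmult_plus_distr_r, exp_plus; ring).
    apply Rmult_le_compat; auto using Rabs_pos.
  - replace (F g * F' g - F g' * F' g') with (F g * (F' g - F' g') + F' g' * (F g - F g')) by ring.
    eapply Rle_trans; [apply Rabs_triang |]. rewrite !Rabs_mult.
    set (E := exp ((c + c') * (s + s'))).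
    assert (HCq : 0 <= C * C' * q) by (apply Rmult_le_pos; [apply Rmult_le_pos |]; lra).
    assert (A1 : Rabs (F g) * Rabs (F' g - F' g') <= C * C' * E * q).
    { eapply Rle_trans;
        [apply Rmult_le_compat; [apply Rabs_pos | apply Rabs_pos | apply H1 | apply H2'] |].
      replace (C * exp (c * s) * (C' * exp (c' * (s + s')) * q))
        with (C * C' * q * exp (c * s + c' * (s + s'))) by (rewrite exp_plus; ring).
      replace (C * C' * E * q) with (C * C' * q * E) by ring.
      apply Rmult_le_compat_l; [exact HCq |]. apply exp_le_exp. nra. }
    assert (A2 : Rabs (F' g') * Rabs (F g - F g') <= C * C' * E * q).
    { eapply Rle_trans;
        [apply Rmult_le_compat; [apply Rabs_pos | apply Rabs_pos | apply H1'' | apply H2] |].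
      replace (C' * exp (c' * s') * (C * exp (c * (s + s')) * q))
        with (C * C' * q * exp (c' * s' + c * (s + s'))) by (rewrite exp_plus; ring).
      replace (C * C' * E * q) with (C * C' * q * E) by ring.
      apply Rmult_le_compat_l; [exact HCq |]. apply exp_le_exp. nra. }
    lra.
Qed.

Lemma tame_lsum {A : Type} k (F : A -> (nat -> R) -> R) l :
  (forall a, In a l -> tame k (F a)) -> tame k (fun g => lsum (fun a => F a g) l).
Proof.
  induction l as [| a l IH]; intro H; [apply (tame_const k 0) |].
  apply tame_plus; [apply H, in_eq | apply IH; intros; apply H, in_cons; auto].
Qed.

Lemma Xrec_idmx_S i g j m :
  Xrec idmx i g (S j) m = if Nat.eqb m (i j) then g j else Xrec idmx i g j m.
Proof.
  simpl. unfold idmx. destruct (Nat.eqb m (i j)) eqn:E; [apply Nat.eqb_eq in E; subst |]; ring.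
Qed.

Lemma Rabs_Xrec_idmx_le i g j m : Rabs (Xrec idmx i g j m) <= abs_sum j g.
Proof.
  induction j as [| j IH]; [simpl; rewrite Rabs_R0; apply abs_sum_nonneg |].
  unfold abs_sum. rewrite Xrec_idmx_S, lsum_seq_last. fold (abs_sum j g).
  pose proof (abs_sum_nonneg j g). pose proof (Rabs_pos (g j)). destruct (Nat.eqb m (i j)); lra.
Qed.

Lemma Rabs_Xrec_idmx_sub_le i g g' j m :
  Rabs (Xrec idmx i g j m - Xrec idmx i g' j m) <= abs_dist j g g'.
Proof.
  induction j as [| j IH]; [simpl; rewrite Rminus_diag, Rabs_R0; apply abs_dist_nonneg |].
  unfold abs_dist. rewrite !Xrec_idmx_S, lsum_seq_last. fold (abs_dist j g g').
  pose proof (abs_dist_nonneg j g g'). pose proof (Rabs_pos (g j - g' j)).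
  destruct (Nat.eqb m (i j)); lra.
Qed.

Lemma Rabs_sqrt_sub_le u v : 0 <= u -> 0 <= v -> Rabs (sqrt u - sqrt v) <= sqrt (Rabs (u - v)).
Proof.
  assert (Hsub : forall p q, 0 <= q <= p -> sqrt p - sqrt q <= sqrt (p - q)).
  { intros p q Hqp. pose proof (sqrt_pos q). pose proof (sqrt_pos (p - q)).
    cut (sqrt p <= sqrt q + sqrt (p - q)); [lra |].
    apply Rsqr_incr_0_var; [| lra]. unfold Rsqr. rewrite sqrt_sqrt by lra.
    replace ((sqrt q + sqrt (p - q)) * (sqrt q + sqrt (p - q)))
      with (sqrt q * sqrt q + sqrt (p - q) * sqrt (p - q) + 2 * sqrt q * sqrt (p - q)) by ring.
    rewrite !sqrt_sqrt by lra. nra. }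
  intros Hu Hv. destruct (Rle_or_lt v u) as [Hvu | Huv].
  - pose proof (sqrt_le_1_alt v u Hvu).
    rewrite !Rabs_right by lra. apply Hsub; lra.
  - pose proof (sqrt_le_1_alt u v (Rlt_le _ _ Huv)).
    rewrite Rabs_left1, (Rabs_left1 (u - v)) by lra. rewrite !Ropp_minus_distr. apply Hsub; lra.
Qed.

Lemma sqrt_le_exp t : 0 <= t -> sqrt t <= exp t.
Proof.
  intro Ht. eapply Rle_trans; [| apply exp_ineq1_le].
  apply Rsqr_incr_0_var; [unfold Rsqr; rewrite sqrt_sqrt; nra | lra].
Qed.

Lemma tame_enorm_Xrec d i j k : (j <= k)%nat -> tame k (fun g => enorm d (Xrec idmx i g j)).
Proof.
  intro Hjk. exists (sqrt (INR d)), 1. split; [apply sqrt_pos |]. split; [lra |]. intros g g'.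
  set (x := Xrec idmx i g j). set (y := Xrec idmx i g' j).
  set (S := abs_sum k g). set (S' := abs_sum k g'). set (D := abs_dist k g g').
  assert (Hx : forall m, Rabs (x m) <= S).
  { intro m. eapply Rle_trans; [apply Rabs_Xrec_idmx_le |].
    apply lsum_seq_mono; auto. intro; apply Rabs_pos. }
  assert (Hy : forall m, Rabs (y m) <= S').
  { intro m. eapply Rle_trans; [apply Rabs_Xrec_idmx_le |].
    apply lsum_seq_mono; auto. intro; apply Rabs_pos. }
  assert (Hxy : forall m, Rabs (x m - y m) <= D).
  { intro m. eapply Rle_trans; [apply Rabs_Xrec_idmx_sub_le |].
    apply lsum_seq_mono; auto. intro; apply Rabs_pos. }
  assert (HS : 0 <= S) by apply abs_sum_nonneg. assert (HS' : 0 <= S') by apply abs_sum_nonneg.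
  assert (HD : 0 <= D) by apply abs_dist_nonneg. pose proof (pos_INR d).
  assert (Hsum : forall (f : nat -> R) B, (forall m, f m <= B) -> lsum f (seq 0 d) <= INR d * B).
  { intros f B Hf. replace (INR d) with (INR (length (seq 0 d))) by (rewrite length_seq; auto).
    rewrite <- lsum_const. apply lsum_le; auto. }
  assert (Hsq : forall z, 0 <= lsum (fun m => z m ^ 2) (seq 0 d))
    by (intro; apply lsum_nonneg; intro; simpl; nra).
  unfold enorm. rewrite !Rmult_1_l. split.
  - rewrite Rabs_right by apply Rle_ge, sqrt_pos.
    apply Rle_trans with (sqrt (INR d * (S * S))).
    + apply sqrt_le_1_alt, Hsum. intro m. specialize (Hx m). pose proof (Rabs_pos (x m)).
      rewrite <- Rsqr_pow2, Rsqr_abs. unfold Rsqr. nra.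
    + rewrite sqrt_mult_alt, sqrt_square by lra. apply Rmult_le_compat_l; [apply sqrt_pos |].
      pose proof (exp_ineq1_le S). lra.
  - eapply Rle_trans; [apply Rabs_sqrt_sub_le; apply Hsq |].
    apply Rle_trans with (sqrt (INR d * (D * (S + S')))).
    + apply sqrt_le_1_alt.
      replace (lsum (fun m => x m ^ 2) (seq 0 d) - lsum (fun m => y m ^ 2) (seq 0 d))
        with (lsum (fun m => x m ^ 2 + -1 * y m ^ 2) (seq 0 d)) by (rewrite lsum_lin; ring).
      eapply Rle_trans; [apply Rabs_lsum_le | apply Hsum]. intro m.
      replace (x m ^ 2 + -1 * y m ^ 2) with ((x m - y m) * (x m + y m)) by ring.
      rewrite Rabs_mult. apply Rmult_le_compat; try apply Rabs_pos; [apply Hxy |].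
      eapply Rle_trans; [apply Rabs_triang | pose proof (Hx m); pose proof (Hy m); lra].
    + rewrite !sqrt_mult_alt by nra.
      rewrite (Rmult_comm (sqrt D)), Rmult_assoc. apply Rmult_le_compat_l; [apply sqrt_pos |].
      apply Rmult_le_compat_r; [apply sqrt_pos | apply sqrt_le_exp; lra].
Qed.

Lemma tame_sq_err d n m : tame n (sq_err_avg_idx idmx d n m).
Proof.
  unfold sq_err_avg_idx. apply tame_scal, tame_lsum. intros s _.
  set (avg g := lsum (fun j => enorm d (Xrec idmx (fun t => nth t s O) g j)) (seq 0 n) / INR n).
  apply (tame_ext n (fun g => (avg g + -1 * m) * (avg g + -1 * m))); [intro; unfold avg; ring |].
  assert (Havg : tame n (fun g => avg g + -1 * m)).
  { apply tame_plus; [| apply tame_const].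
    apply (tame_ext n (fun g =>
      / INR n * lsum (fun j => enorm d (Xrec idmx (fun t => nth t s O) g j)) (seq 0 n)));
      [intro; unfold avg, Rdiv; ring |].
    apply tame_scal, tame_lsum. intros j Hj. apply in_seq in Hj. apply tame_enorm_Xrec. lia. }
  apply tame_mul; exact Havg.
Qed.

(** * The lower bound *)

Definition sumsq (j : nat) (g : nat -> R) : R := lsum (fun t => g t ^ 2) (seq 0 j).

Lemma sumsq_nonneg j g : 0 <= sumsq j g.
Proof. apply lsum_nonneg. intro; simpl; nra. Qed.

Lemma sumsq_gcons j x g : sumsq (S j) (gcons x g) = x ^ 2 + sumsq j g.
Proof. apply lsum_seq_S0. Qed.

Lemma gexp_sumsq k : forall j, (j <= k)%nat -> gexp k (sumsq j) (INR j).
Proof.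
  induction k as [| k IH]; intros j Hj.
  - replace j with O by lia. reflexivity.
  - destruct j as [| j]; [apply (gexp_const (S k) 0) |].
    exists (fun x => x ^ 2 + INR j). split.
    + intro x. rewrite <- (Rmult_1_l (INR j)).
      apply (gexp_ext k (fun g => x ^ 2 + 1 * sumsq j g)); [intro; rewrite sumsq_gcons; ring |].
      apply gexp_lin; [apply gexp_const | apply IH; lia].
    + replace (INR (S j)) with (3 * 0 + 1 + INR j) by (rewrite S_INR; ring).
      eapply is_RInt_R_ext; [| apply is_RInt_R_gauss_poly4]. intro x. cbv beta. ring.
Qed.

Lemma gexp_sumsq_sqr k : gexp k (fun g => sumsq k g * sumsq k g) (INR k * INR k + 2 * INR k).
Proof.
  induction k as [| k IH]; [simpl; unfold sumsq, lsum; simpl; ring |].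
  exists (fun x => x ^ 4 + 2 * INR k * x ^ 2 + (INR k * INR k + 2 * INR k)). split.
  - intro x.
    pose proof (gexp_lin k _ _ _ _ (2 * x ^ 2) (gexp_const k (x ^ 4)) (gexp_sumsq k k (le_n k)))
      as H.
    eapply gexp_ext; [| replace (x ^ 4 + 2 * INR k * x ^ 2 + (INR k * INR k + 2 * INR k))
                         with (x ^ 4 + 2 * x ^ 2 * INR k + 1 * (INR k * INR k + 2 * INR k)) by ring;
                       exact (gexp_lin k _ _ _ _ 1 H IH)].
    intro g. rewrite sumsq_gcons. simpl. ring.
  - replace (INR (S k) * INR (S k) + 2 * INR (S k))
      with (3 * 1 + 2 * INR k + (INR k * INR k + 2 * INR k)) by (rewrite S_INR; ring).
    eapply is_RInt_R_ext; [| apply is_RInt_R_gauss_poly4]. intro x. cbv beta. ring.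
Qed.

Lemma lsum_sq_update_le (x : nat -> R) i y l : NoDup l ->
  lsum (fun m => (if Nat.eqb m i then y else x m) ^ 2) l <= lsum (fun m => x m ^ 2) l + y ^ 2.
Proof.
  induction l as [| a l IH]; intro Hnd; [unfold lsum; simpl; nra |].
  inversion Hnd as [| ? ? Ha Hl]; subst. rewrite !lsum_cons.
  destruct (Nat.eqb a i) eqn:E; [| specialize (IH Hl); lra].
  apply Nat.eqb_eq in E. subst.
  rewrite (lsum_ext_in _ (fun m => x m ^ 2) l); [simpl; nra |].
  intros b Hb. destruct (Nat.eqb b i) eqn:E2; auto. apply Nat.eqb_eq in E2. subst. contradiction.
Qed.

Lemma lsum_sq_Xrec_idmx_le d i g j : lsum (fun m => Xrec idmx i g j m ^ 2) (seq 0 d) <= sumsq j g.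
Proof.
  induction j as [| j IH].
  - unfold sumsq. simpl. rewrite (lsum_ext_in _ (fun _ => 0)), !lsum_const by (intros; simpl; ring).
    unfold lsum. simpl. lra.
  - rewrite (lsum_ext_in _ (fun m => (if Nat.eqb m (i j) then g j else Xrec idmx i g j m) ^ 2))
      by (intros; rewrite Xrec_idmx_S; auto).
    unfold sumsq. rewrite lsum_seq_last. fold (sumsq j g).
    eapply Rle_trans; [apply lsum_sq_update_le, seq_NoDup | lra].
Qed.

Lemma sqrt_le_am_gm t c : 0 <= t -> 0 < c -> sqrt t <= (t + c) / (2 * sqrt c).
Proof.
  intros Ht Hc. pose proof (sqrt_lt_R0 c Hc). pose proof (sqrt_pos t).
  apply Rmult_le_reg_r with (2 * sqrt c); [lra |].
  unfold Rdiv. rewrite Rmult_assoc, Rinv_l, Rmult_1_r by lra.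
  pose proof (sqrt_sqrt t Ht). pose proof (sqrt_sqrt c (Rlt_le _ _ Hc)).
  pose proof (Rle_0_sqr (sqrt t - sqrt c)). unfold Rsqr in *. nra.
Qed.

Lemma enorm_Xrec_idmx_le d i g j c : 0 < c ->
  enorm d (Xrec idmx i g j) <= (sumsq j g + c) / (2 * sqrt c).
Proof.
  intro Hc. unfold enorm. eapply Rle_trans; [apply sqrt_le_1_alt, lsum_sq_Xrec_idmx_le |].
  apply sqrt_le_am_gm; [apply sumsq_nonneg | exact Hc].
Qed.

Definition avg_majorant (n : nat) (g : nat -> R) : R :=
  / INR n * lsum (fun j => (sumsq j g + INR n) / (2 * sqrt (INR n))) (seq 0 n).

Lemma length_all_seqs d n : length (all_seqs d n) = (d ^ n)%nat.
Proof.
  induction n as [| n IH]; [reflexivity |]. simpl all_seqs.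
  assert (G : forall l : list nat,
    length (flat_map (fun a => map (cons a) (all_seqs d n)) l) = (length l * d ^ n)%nat).
  { induction l as [| a l IHl]; [reflexivity |].
    simpl. rewrite length_app, length_map, IHl, IH. lia. }
  rewrite G, length_seq. simpl. lia.
Qed.

(* [(A - m)^2 >= m^2 - 2 m A] and [A <= avg_majorant] for the average [A >= 0] of the norms. *)
Lemma sq_err_ge d n m g : (0 < d)%nat -> (0 < n)%nat -> 0 <= m ->
  m * m - 2 * m * avg_majorant n g <= sq_err_avg_idx idmx d n m g.
Proof.
  intros Hd Hn Hm. unfold sq_err_avg_idx.
  assert (Hdn : 0 < INR d ^ n) by (apply pow_lt, lt_0_INR; auto).
  assert (Hn' : 0 < INR n) by (apply lt_0_INR; auto).
  replace (m * m - 2 * m * avg_majorant n g)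
    with (/ INR d ^ n * (INR (length (all_seqs d n)) * (m * m - 2 * m * avg_majorant n g)))
    by (rewrite length_all_seqs, pow_INR; field; lra).
  apply Rmult_le_compat_l; [apply Rlt_le, Rinv_0_lt_compat, Hdn |].
  rewrite <- lsum_const. apply lsum_le. intros s _.
  set (A := lsum (fun j => enorm d (Xrec idmx (fun t => nth t s O) g j)) (seq 0 n) / INR n).
  assert (HA : A <= avg_majorant n g).
  { unfold A, avg_majorant, Rdiv. rewrite Rmult_comm.
    apply Rmult_le_compat_l; [apply Rlt_le, Rinv_0_lt_compat, Hn' |].
    apply lsum_le. intros j _. apply enorm_Xrec_idmx_le, Hn'. }
  assert (HA0 : 0 <= A).
  { apply Rdiv_le_0_compat; [| exact Hn']. apply lsum_nonneg. intro; apply sqrt_pos. }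
  simpl. nra.
Qed.

Lemma gexp_avg_majorant n : (0 < n)%nat ->
  gexp n (avg_majorant n) ((3 * INR n - 1) / (4 * sqrt (INR n))).
Proof.
  intro Hn. assert (Hn' : 0 < INR n) by (apply lt_0_INR; auto).
  assert (Hs : 0 < sqrt (INR n)) by (apply sqrt_lt_R0; auto).
  set (c := / (2 * sqrt (INR n))).
  replace ((3 * INR n - 1) / (4 * sqrt (INR n)))
    with (/ INR n * lsum (fun j => INR n * c + c * INR j) (seq 0 n)).
  - apply gexp_scal, gexp_lsum. intros j Hj. apply in_seq in Hj.
    apply (gexp_ext n (fun g => INR n * c + c * sumsq j g)).
    { intro g. unfold c. field. lra. }
    apply gexp_lin; [apply gexp_const | apply gexp_sumsq; lia].
  - rewrite lsum_lin, lsum_const, lsum_INR_seq, length_seq. unfold c. field. lra.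
Qed.

(* [sqrt S >= (3 d S - S^2) / (2 d sqrt d)], then take expectations using the first two
   moments [E S = d] and [E S^2 = d^2 + 2 d] of [S = |g|^2]. *)
Lemma gexp_enorm_ge d m : (0 < d)%nat -> gexp d (enorm d) m -> (INR d - 1) / sqrt (INR d) <= m.
Proof.
  intros Hd Hm. assert (Hd' : 0 < INR d) by (apply lt_0_INR; auto).
  assert (Hq : 0 < sqrt (INR d)) by (apply sqrt_lt_R0; auto).
  assert (Hqq : sqrt (INR d) * sqrt (INR d) = INR d) by (apply sqrt_sqrt; lra).
  set (q := sqrt (INR d)) in *.
  set (a := 3 * INR d / (2 * INR d * q)). set (b := - / (2 * INR d * q)).
  pose proof (gexp_lin d _ _ _ _ b (gexp_scal _ _ _ a (gexp_sumsq d d (le_n d)))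
                (gexp_sumsq_sqr d)) as H.
  refine (Rle_trans _ _ _ _ (gexp_le d _ _ _ _ _ H Hm)); [right; unfold a, b; field; lra |].
  intro g. unfold enorm. fold (sumsq d g).
  pose proof (sumsq_nonneg d g) as HS. set (S := sumsq d g) in *.
  pose proof (sqrt_sqrt S HS) as Hs. pose proof (sqrt_pos S). set (s := sqrt S) in *.
  unfold a, b. rewrite <- Hs, <- Hqq.
  apply Rmult_le_reg_r with (2 * (q * q) * q); [nra |].
  field_simplify; [| lra].
  assert (E : 2 * q ^ 3 * s - (3 * q ^ 2 * s ^ 2 - s ^ 4) = s * ((s - q) * (s - q)) * (s + 2 * q))
    by ring.
  assert (0 <= s * ((s - q) * (s - q)) * (s + 2 * q))
    by (apply Rmult_le_pos; [apply Rmult_le_pos; [| apply Rle_0_sqr] |]; lra).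
  lra.
Qed.

Lemma sq_err_lower_arith n m : 1 <= n -> (4 * n - 1) / (2 * sqrt n) <= m ->
  (4 * n - 1) / 4 <= m * m - 2 * m * ((3 * n - 1) / (4 * sqrt n)).
Proof.
  intros Hn Hm. pose proof (sqrt_sqrt n ltac:(lra)) as Hqq.
  assert (Hq : 1 <= sqrt n) by (rewrite <- sqrt_1; apply sqrt_le_1_alt; lra).
  set (q := sqrt n) in *. rewrite <- Hqq in *.
  assert (Hu : q / 2 <= m - 2 * ((3 * (q * q) - 1) / (4 * q))).
  { apply Rle_trans with ((4 * (q * q) - 1) / (2 * q) - 2 * ((3 * (q * q) - 1) / (4 * q)));
      [right; field; lra | lra]. }
  assert (Hm0 : 0 <= (4 * (q * q) - 1) / (2 * q)) by (apply Rdiv_le_0_compat; nra).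
  replace ((4 * (q * q) - 1) / 4) with ((4 * (q * q) - 1) / (2 * q) * (q / 2)) by (field; lra).
  replace (m * m - 2 * m * ((3 * (q * q) - 1) / (4 * q)))
    with (m * (m - 2 * ((3 * (q * q) - 1) / (4 * q)))) by ring.
  apply Rmult_le_compat; lra.
Qed.

Theorem mainTheorem10 (d : nat) (hd4 : (4 <= d)%nat) (hdiv : Nat.modulo d 4 = 0%nat)
  (m : R) (hm : gexp d (fun x => enorm d x) m) :
  (exists l, gexp (d / 4) (sq_err_avg_idx idmx d (d / 4) m) l) /\
  (forall l, gexp (d / 4) (sq_err_avg_idx idmx d (d / 4) m) l ->
     l >= INR d / 25).
Proof.
  split; [apply tame_gexp_exists, tame_sq_err |].
  intros l Hl. set (n := (d / 4)%nat) in *.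
  assert (Hdn : d = (4 * n)%nat) by (pose proof (Nat.div_mod_eq d 4); unfold n; lia).
  assert (Hn : (0 < n)%nat) by lia.
  assert (HnR : 1 <= INR n) by (apply (le_INR 1); lia).
  assert (HdR : INR d = 4 * INR n) by (rewrite Hdn, mult_INR; simpl; ring).
  assert (Hsd : sqrt (INR d) = 2 * sqrt (INR n)).
  { rewrite HdR, sqrt_mult_alt by lra. replace 4 with (2 * 2) by ring.
    rewrite sqrt_square; lra. }
  pose proof (gexp_enorm_ge d m ltac:(lia) hm) as Hm. rewrite Hsd, HdR in Hm.
  assert (Hm0 : 0 <= m).
  { eapply Rle_trans; [| exact Hm].
    apply Rdiv_le_0_compat; [lra | apply Rmult_lt_0_compat; [lra | apply sqrt_lt_R0; lra]]. }
  assert (Hpt : forall g, m * m + -2 * m * avg_majorant n g <= sq_err_avg_idx idmx d n m g)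
    by (intro g; pose proof (sq_err_ge d n m g ltac:(lia) Hn Hm0); lra).
  pose proof (gexp_le n _ _ _ _ Hpt
                (gexp_lin n _ _ _ _ (-2 * m) (gexp_const n (m * m)) (gexp_avg_majorant n Hn)) Hl).
  pose proof (sq_err_lower_arith (INR n) m HnR Hm). lra.
Qed.
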